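(* Let $m\geq 2$ and $G=T^+_{m,1}$ with root $r$, stem $r'$, and children $r_1,\dots,r_m$ of $r$. If $S$ is a Type II set for $G$, then $N_G[r]\setminus\mathcal{P}^\infty(S)=\{r',r_i\}$ for some $i\in[m]$. Furthermore, for all $k\ge 0$, $$H^k_{m,1}=\langle\mathcal{H}^{1}\oplus\mathcal{E}^{m-1}\rangle^k_{m,0}\quad\text{and}\quad E^k_{m,1}=\langle\mathcal{H}^{0}\oplus\mathcal{E}^{m}\rangle^k_{m,0}+\sum_{\ell=0}^{m}\langle\mathcal{H}^{\ell}\oplus\mathcal{E}^{m-\ell}\rangle^{k-1}_{m,0}.$$
   Context: Power domination: for a graph $G=(V,E)$ and $S\subseteq V$, $\mathcal{P}^0(S)=N[S]$ and for $k\ge1$, $\mathcal{P}^k(S)=\mathcal{P}^{k-1}(S)\cup N^*(\mathcal{P}^{k-1}(S))$, where $x\in N^*(A)$ iff some $a\in A$ has $x$ as its only neighbor not in $A$; $\mathcal{P}^\infty(S)$ is the stable value (the set of observed vertices), and $S$ is a power dominating set if $\mathcal{P}^\infty(S)=V$. $T_{m,h}$ is the complete $m$-ary tree of height $h$ rooted at $r$; $T^+_{m,h}$ is $T_{m,h}$ plus a new vertex $r'$ (stem) joined to $r$. For $G=T^+_{m,h}$, a set $S\subseteq V(G)\setminus\{r'\}$ is Type I if it is a power dominating set for $G$; Type II if it is not but $S\cup\{r'\}$ is; Type 0 otherwise. $E^k_{m,h}$ and $H^k_{m,h}$ denote the numbers of Type I and Type II sets of size $k$ for $T^+_{m,h}$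 (zero for $k<0$). Define $$\langle\mathcal{H}^{\ell}\oplus\mathcal{E}^{m-\ell}\rangle^k_{m,h}=\sum \binom{m}{\ell}\binom{\ell}{s_0,\dots,s_k}\binom{m-\ell}{t_0,\dots,t_k}\Big(\prod_{j=1}^{\ell}H^{i_j}_{m,h}\Big)\Big(\prod_{j=\ell+1}^{m}E^{i_j}_{m,h}\Big),$$ the sum over all tuples of nonnegative integers $(i_1,\dots,i_m)$ with $i_1\le\cdots\le i_\ell$, $i_{\ell+1}\le\cdots\le i_m$, and $i_1+\cdots+i_m=k$, where $s_\alpha=|\{j\in[\ell]:i_j=\alpha\}|$ and $t_\beta=|\{j\in[\ell+1,m]:i_j=\beta\}|$ (empty sum $=0$ for $k<0$). *)

From mathcomp Require Import all_boot.
Set Implicit Arguments. Unset Strict Implicit. Unset Printing Implicit Defensive.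

Section PowerDom.
Variables (V : finType) (adj : rel V).

Definition nbh (x : V) : {set V} := [set y | adj x y].
Definition cnbh (S : {set V}) : {set V} := S :|: \bigcup_(x in S) nbh x.
Definition nstar (A : {set V}) : {set V} :=
  [set x | [exists a in A, (nbh a :\: A) == [set x]]].
Fixpoint pk (k : nat) (S : {set V}) : {set V} :=
  match k with
  | 0 => cnbh S
  | k'.+1 => pk k' S :|: nstar (pk k' S)
  end.
(* P^infty(S): the stable value; the chain P^0 ⊆ P^1 ⊆ ... in the finite
   set V stabilises after at most #|V| steps, so it equals the union of
   P^0, ..., P^{#|V|}. *)
Definition pinf (S : {set V}) : {set V} := \bigcup_(k < #|V|.+1) pk k S.
Definition power_dominating (S : {set V}) : bool := pinf S == [set: V].
End PowerDom.

(* Vertices of T_{m,h}: words over 'I_m of length d <= h (root = empty word,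
   children of w are the words rcons w a). *)
Definition tnode (m h : nat) := {d : 'I_h.+1 & (nat_of_ord d).-tuple 'I_m}.
(* Vertices of T^+_{m,h}: None is the stem r', Some w a tree vertex. *)
Definition tvtx (m h : nat) := option (tnode m h).

Definition word (m h : nat) (x : tnode m h) : seq 'I_m := val (tagged x).

Definition childb (m h : nat) (x y : tnode m h) : bool :=
  (size (word y) == (size (word x)).+1) && prefix (word x) (word y).

Definition tadj (m h : nat) (u v : tvtx m h) : bool :=
  match u, v with
  | None, None => false
  | None, Some y => size (word y) == 0
  | Some x, None => size (word x) == 0
  | Some x, Some y => childb x y || childb y x
  end.

Definition troot (m h : nat) : tvtx m h :=
  Some (existT (fun d : 'I_h.+1 => (nat_of_ord d).-tuple 'I_m) ord0 [tuple]).
Definition tstem (m h : nat) : tvtx m h := None.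
Definition tchild1 (m : nat) (i : 'I_m) : tvtx m 1 :=
  Some (existT (fun d : 'I_2 => (nat_of_ord d).-tuple 'I_m) ord_max [tuple i]).

Definition TpdS (m h : nat) (S : {set tvtx m h}) : bool :=
  power_dominating (@tadj m h) S.

Definition typeI (m h : nat) (S : {set tvtx m h}) : bool :=
  (tstem m h \notin S) && TpdS S.
Definition typeII (m h : nat) (S : {set tvtx m h}) : bool :=
  [&& tstem m h \notin S, ~~ TpdS S & TpdS (tstem m h |: S)].

(* E^k_{m,h}, H^k_{m,h} for k >= 0 (the value 0 for k < 0 is handled
   explicitly where needed) *)
Definition Ecount (m h k : nat) : nat :=
  #|[set S : {set tvtx m h} | typeI S & #|S| == k]|.
Definition Hcount (m h k : nat) : nat :=
  #|[set S : {set tvtx m h} | typeII S & #|S| == k]|.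

Definition multinom (n : nat) (s : seq nat) : nat :=
  n`! %/ \prod_(x <- s) x`!.

(* <H^l (+) E^{m-l}>^k_{m,h}, for k >= 0.  Tuples (i_1,...,i_m) are
   functions f : 'I_m -> 'I_(k+1) (each i_j <= k since they sum to k); the
   positions j < l correspond to [l], the positions j >= l to [l+1, m]. *)
Definition bracket (m h l k : nat) : nat :=
  \sum_(f : {ffun 'I_m -> 'I_k.+1} |
        [&& (\sum_(j < m) (f j : nat) == k)%N,
            [forall j1 : 'I_m, forall j2 : 'I_m,
               ((j1 < j2) && (j2 < l)) ==> (f j1 <= f j2)] &
            [forall j1 : 'I_m, forall j2 : 'I_m,
               ((l <= j1) && (j1 < j2)) ==> (f j1 <= f j2)]])
    'C(m, l)
    * multinom l [seq #|[set j : 'I_m | (j < l) && (f j == a)]| | a : 'I_k.+1]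
    * multinom (m - l) [seq #|[set j : 'I_m | (l <= j) && (f j == a)]| | a : 'I_k.+1]
    * (\prod_(j < m | j < l) Hcount m h (f j))
    * (\prod_(j < m | l <= j) Ecount m h (f j)).

(* In T^+_{m,0} (the edge r' -- r) the only Type II set is the empty set and the
   only Type I set is {r}; hence H^i_{m,0} = [i = 0], E^i_{m,0} = [i = 1], and
   every bracket <H^l (+) E^{m-l}>^k_{m,0} reduces to the single tuple
   (0,...,0,1,...,1), giving 'C(m, l) if k = m - l and 0 otherwise.
   In T^+_{m,1} (m >= 2) every vertex except r is a leaf at r.  A stem-free set
   containing r, or containing all children, is power dominating; the set of
   all children but r_i observes exactly itself and r, and becomes power
   dominating once r' is added; if two children are missing, neither S nor
   S + r' is power dominating.  So the Type II sets are the m sets of all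
   children but one (H^k_{m,1} = m [k = m - 1]) and the Type I sets are the
   root with any k - 1 children plus the set of all children
   (E^k_{m,1} = 'C(m, k - 1) + [k = m]).  Comparing with the height-0 brackets
   gives the theorem. *)
From mathcomp Require Import all_boot.
Set Implicit Arguments. Unset Strict Implicit. Unset Printing Implicit Defensive.

Section PowerDomination.
Variables (V : finType) (adj : rel V).
Implicit Types (S A : {set V}) (a v x y : V).

Local Notation PD := (power_dominating adj).

Lemma in_cnbh v S : (v \in cnbh adj S) = (v \in S) || [exists x in S, adj x v].
Proof.
rewrite /cnbh in_setU; congr (_ || _).
apply/bigcupP/existsP => [[x xS]|[x /andP[xS]]]; rewrite ?inE => xv;
  by exists x; rewrite ?inE ?xS.
Qed.

Lemma pk_sub_pinf k S : k <= #|V| -> pk adj k S \subset pinf adj S.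
Proof. by move=> hk; apply: (bigcup_sup (Ordinal (hk : k < #|V|.+1))). Qed.

Lemma cnbh_sub_pinf S : cnbh adj S \subset pinf adj S.
Proof. exact: (@pk_sub_pinf 0 S (leq0n _)). Qed.

Lemma pd_of_cnbh S : cnbh adj S = [set: V] -> PD S.
Proof. by move=> h; rewrite /power_dominating eqEsubset subsetT -{1}h cnbh_sub_pinf. Qed.

Lemma pd_of_cnbh_but_one S a x :
  (forall v, v != x -> v \in cnbh adj S) -> adj a x -> a != x -> PD S.
Proof.
move=> cover ax a_neq_x.
have obs1 : pk adj 1 S = [set: V].
  apply/setP => v; rewrite [RHS]inE /= in_setU.
  have [->|vx] := eqVneq v x; last by rewrite cover.
  have [//|xN] := boolP (x \in cnbh adj S); rewrite /= inE.
  apply/existsP; exists a; rewrite cover //=.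
  apply/eqP/setP => w; rewrite in_setD in_set1 [w \in nbh _ _]inE.
  by have [->|wx] := eqVneq w x; rewrite ?ax ?xN ?cover.
have V_gt0 : 0 < #|V| by apply/card_gt0P; exists x.
by rewrite /power_dominating eqEsubset subsetT -{1}obs1 pk_sub_pinf.
Qed.

(* A set A is forcing-closed when no vertex of A has exactly one neighbour
   outside A; the propagation rule can then never leave A. *)
Definition forcing_closed A :=
  forall a x, a \in A -> x \notin A -> adj a x ->
    exists y, [/\ adj a y, y \notin A & y != x].

Lemma pinf_sub_closed S A :
  cnbh adj S \subset A -> forcing_closed A -> pinf adj S \subset A.
Proof.
move=> NS_A closedA.
suff pkA k : pk adj k S \subset A by apply/bigcupsP => k _; exact: pkA.
elim: k => [|k IH] //=; rewrite subUset IH /=.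
apply/subsetP => x; rewrite inE => /existsP[a /andP[aP /eqP forced]].
apply/negPn/negP => xA.
have : x \in nbh adj a :\: pk adj k S by rewrite forced set11.
rewrite !inE => /andP[_ ax].
have [y [ay yA yx]] := closedA a x (subsetP IH a aP) xA ax.
have : y \in nbh adj a :\: pk adj k S.
  by rewrite !inE ay andbT; apply: contra yA; exact: (subsetP IH).
by rewrite forced inE (negbTE yx).
Qed.

Lemma not_pd_of_closed S A x :
  cnbh adj S \subset A -> forcing_closed A -> x \notin A -> ~~ PD S.
Proof.
move=> NS_A closedA xA; apply: contra xA => /eqP full.
by apply: (subsetP (pinf_sub_closed NS_A closedA)); rewrite full inE.
Qed.

End PowerDomination.

Section StarHeightZero.
Variable m : nat.
Local Notation V := (tvtx m 0).
Local Notation stem := (tstem m 0).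
Local Notation root := (troot m 0).
Local Notation PD := (power_dominating (@tadj m 0)).
Implicit Types (S : {set V}) (v : V).

Lemma vertex0_cases v : v = stem \/ v = root.
Proof.
case: v => [[[[|n] hn] t]|]; [right | by [] | by left].
by rewrite (tuple0 t) /troot (eq_irrelevance hn (ltn0Sn 0)).
Qed.

Lemma cnbh0_full S : (stem \in S) || (root \in S) -> cnbh (@tadj m 0) S = [set: V].
Proof.
move=> h; apply/setP => v; rewrite [RHS]inE in_cnbh.
case/orP: h => h; case: (vertex0_cases v) => ->; rewrite ?h //; apply/orP; right;
  apply/existsP; [exists stem | exists root]; rewrite h //.
Qed.

Lemma not_pd0_set0 : ~~ PD set0.
Proof.
apply: (@not_pd_of_closed _ _ _ set0 stem); rewrite ?inE //.
  by apply/subsetP => v; rewrite in_cnbh inE /=; case/existsP => x; rewrite inE.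
by move=> a x; rewrite inE.
Qed.

Lemma stemless0_cases S : stem \notin S -> S = set0 \/ S = [set root].
Proof.
move=> stS; have [rS|rS] := boolP (root \in S); [right|left]; apply/setP => v;
  case: (vertex0_cases v) => ->; rewrite ?inE ?(negbTE stS) ?eqxx //.
exact: negbTE.
Qed.

Lemma typeII0 S : typeII S = (S == set0).
Proof.
rewrite /typeII /TpdS; have [stS|stS] /= := boolP (stem \in S).
  by apply/esym/negP => /eqP S0; rewrite S0 inE in stS.
case: (stemless0_cases stS) => ->.
  by rewrite not_pd0_set0 pd_of_cnbh ?eqxx // cnbh0_full // setU11.
rewrite pd_of_cnbh ?cnbh0_full ?inE ?eqxx ?orbT //=.
by apply/esym/negP => /eqP /setP /(_ root); rewrite !inE eqxx.
Qed.

Lemma typeI0 S : typeI S = (S == [set root]).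
Proof.
rewrite /typeI /TpdS; have [stS|stS] /= := boolP (stem \in S).
  by apply/esym/negP => /eqP S1; rewrite S1 inE in stS.
case: (stemless0_cases stS) => ->.
  rewrite (negbTE not_pd0_set0); apply/esym/negP => /eqP /setP /(_ root).
  by rewrite !inE eqxx.
by rewrite pd_of_cnbh ?cnbh0_full ?inE ?eqxx ?orbT.
Qed.

Lemma Hcount0 k : Hcount m 0 k = (k == 0).
Proof.
rewrite /Hcount; have [->|k0] := eqVneq k 0.
  rewrite (_ : [set S | _ & _] = [set set0]) ?cards1 //; apply/setP => S.
  by rewrite !inE typeII0 cards_eq0 andbb.
apply/eqP; rewrite cards_eq0; apply/eqP/setP => S; rewrite !inE typeII0.
by apply/negP => /andP[/eqP ->]; rewrite cards0 eq_sym (negbTE k0).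
Qed.

Lemma Ecount0 k : Ecount m 0 k = (k == 1).
Proof.
rewrite /Ecount; have [->|k1] := eqVneq k 1.
  rewrite (_ : [set S | _ & _] = [set [set root]]) ?cards1 //; apply/setP => S.
  by rewrite !inE typeI0 andb_idr // => /eqP ->; rewrite cards1.
apply/eqP; rewrite cards_eq0; apply/eqP/setP => S; rewrite !inE typeI0.
by apply/negP => /andP[/eqP ->]; rewrite cards1 eq_sym (negbTE k1).
Qed.

End StarHeightZero.

Lemma card_ord_ge n l : #|[set j : 'I_n | l <= j]| = n - l.
Proof.
rewrite cardsE -sum1_card -[n - l]muln1 -sum_nat_const_nat big_geq_mkord.
by apply: eq_bigl => j; rewrite unfold_in.
Qed.

Lemma card_ord_lt n l : l <= n -> #|[set j : 'I_n | j < l]| = l.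
Proof.
move=> ln; have -> : [set j : 'I_n | j < l] = ~: [set j : 'I_n | l <= j].
  by apply/setP => j; rewrite !inE -ltnNge.
by rewrite cardsCs setCK card_ord card_ord_ge subKn.
Qed.

Lemma sum_ord_ge n l : \sum_(j < n) (l <= j : nat) = n - l.
Proof.
rewrite -card_ord_ge -sum1_card [RHS]big_mkcond /=.
by apply: eq_bigr => j _; rewrite inE; case: leqP.
Qed.

Lemma multinom_const m n K (P : pred 'I_m) (f : 'I_m -> 'I_K) c :
  #|[set j | P j]| = n -> (forall j, P j -> f j = c) ->
  multinom n [seq #|[set j | P j && (f j == a)]| | a : 'I_K] = 1.
Proof.
move=> cardP fc.
have count_c : #|[set j | P j && (f j == c)]| = n.
  rewrite -cardP; apply: eq_card => j; rewrite !inE.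
  by apply/andP/idP => [[]//|Pj]; rewrite fc.
have count_other a : a != c -> #|[set j | P j && (f j == a)]| = 0.
  move=> ac; apply/eqP; rewrite cards_eq0; apply/eqP/setP => j; rewrite !inE.
  by apply/negP => /andP[Pj /eqP fa]; rewrite -fa fc ?eqxx in ac.
rewrite /multinom big_image /= (bigD1 c) //= count_c big1 ?muln1 ?divnn ?fact_gt0 //.
by move=> a /count_other ->.
Qed.

Definition admissible (m l k : nat) (f : {ffun 'I_m -> 'I_k.+1}) : bool :=
  [&& (\sum_(j < m) (f j : nat) == k)%N,
      [forall j1 : 'I_m, forall j2 : 'I_m, ((j1 < j2) && (j2 < l)) ==> (f j1 <= f j2)] &
      [forall j1 : 'I_m, forall j2 : 'I_m, ((l <= j1) && (j1 < j2)) ==> (f j1 <= f j2)]].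

Definition bracket_term (m h l k : nat) (f : {ffun 'I_m -> 'I_k.+1}) : nat :=
  'C(m, l)
  * multinom l [seq #|[set j : 'I_m | (j < l) && (f j == a)]| | a : 'I_k.+1]
  * multinom (m - l) [seq #|[set j : 'I_m | (l <= j) && (f j == a)]| | a : 'I_k.+1]
  * (\prod_(j < m | j < l) Hcount m h (f j))
  * (\prod_(j < m | l <= j) Ecount m h (f j)).

Lemma bracketE m h l k :
  bracket m h l k = \sum_(f : {ffun 'I_m -> 'I_k.+1} | admissible l f) bracket_term h l f.
Proof. by []. Qed.

(* At height 0 the bracket collapses: H^i_{m,0} = [i = 0] and E^i_{m,0} = [i = 1]
   leave the single tuple (0,...,0,1,...,1) with l zeros, whose entries sum to
   m - l and whose multinomial factors are 1. *)
Section BracketHeightZero.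
Variables m l k : nat.
Hypothesis l_le_m : l <= m.

Lemma bracket_term0_support (f : {ffun 'I_m -> 'I_k.+1}) :
  bracket_term 0 l f != 0 -> forall j, (f j : nat) = (l <= j).
Proof.
move=> nz j; apply/eqP; apply: contraR nz => fj; rewrite /bracket_term.
have [jl|lj] := ltnP j l.
  rewrite [X in _ * X * _](bigD1 j) //= Hcount0.
  by move: fj; rewrite leqNgt jl => /negbTE ->; rewrite mul0n muln0 mul0n.
rewrite [X in _ * X](bigD1 j) //= Ecount0.
by move: fj; rewrite lj => /negbTE ->; rewrite mul0n muln0.
Qed.

Definition step_tuple : {ffun 'I_m -> 'I_k.+1} := [ffun j : 'I_m => inord (l <= j)].

Lemma step_tupleE : k = m - l -> forall j, (step_tuple j : nat) = (l <= j).
Proof.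
move=> km j; rewrite ffunE inordK //; case: (leqP l j) => //= lj.
by rewrite km ltnS subn_gt0 (leq_ltn_trans lj).
Qed.

Lemma step_tuple_admissible : k = m - l -> admissible l step_tuple.
Proof.
move=> km; have stepE := step_tupleE km.
have mono (j1 j2 : 'I_m) : j1 < j2 -> step_tuple j1 <= step_tuple j2.
  by move=> j12; rewrite !stepE; case: (leqP l j1) => //= lj1; rewrite (leq_trans lj1 (ltnW j12)).
apply/and3P; split.
- by apply/eqP; rewrite [RHS]km -sum_ord_ge; apply: eq_bigr => j _; rewrite stepE.
- by apply/forallP => j1; apply/forallP => j2; apply/implyP => /andP[/mono].
- by apply/forallP => j1; apply/forallP => j2; apply/implyP => /andP[_ /mono].
Qed.

Lemma bracket_term0_step : k = m - l -> bracket_term 0 l step_tuple = 'C(m, l).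
Proof.
move=> km; have stepE := step_tupleE km; rewrite /bracket_term.
rewrite big1 ?muln1 => [|j /= jl]; last by rewrite Hcount0 stepE leqNgt jl.
rewrite big1 ?muln1 => [|j /= lj]; last by rewrite Ecount0 stepE lj.
rewrite (@multinom_const _ _ _ _ _ (inord 0)) ?card_ord_lt // => [|j jl]; last first.
  by apply/eqP; rewrite -val_eqE /= stepE inordK // leqNgt jl.
rewrite (@multinom_const _ _ _ _ _ (inord 1)) ?card_ord_ge ?muln1 // => j lj.
have := ltn_ord (step_tuple j); rewrite stepE lj => one_lt.
by apply/eqP; rewrite -val_eqE /= stepE lj inordK.
Qed.

Lemma bracket0 : bracket m 0 l k = if k == m - l then 'C(m, l) else 0.
Proof.
rewrite bracketE; have [km|km] := eqVneq k (m - l); last first.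
  apply: big1 => f /and3P[/eqP sumf _ _]; apply/eqP/negPn/negP => /bracket_term0_support fE.
  by move: km; rewrite -sumf -sum_ord_ge (eq_bigr _ (fun j _ => fE j)) eqxx.
rewrite (bigD1 step_tuple) ?step_tuple_admissible //= bracket_term0_step //.
rewrite big1 ?addn0 // => f /andP[_ f_step]; apply/eqP/negPn/negP.
move=> /bracket_term0_support fE; case/negP: f_step; apply/eqP/ffunP => j.
by apply: val_inj; rewrite /= step_tupleE ?fE.
Qed.

End BracketHeightZero.

(* Summing the height-0 brackets over l leaves the binomial coefficient:
   only l = m - k contributes, with 'C(m, m - k) = 'C(m, k). *)
Lemma sum_bracket0 m k : \sum_(l < m.+1) bracket m 0 l k = 'C(m, k).
Proof.
rewrite (eq_bigr (fun l : 'I_m.+1 => if k == m - l then 'C(m, l) else 0)); last first.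
  by move=> l _; rewrite bracket0 // -ltnS.
have [km|mk] := leqP k m; last first.
  rewrite bin_small // big1 // => l _; case: eqP => // kml.
  by move: mk; rewrite kml ltnNge leq_subr.
have mk_lt : m - k < m.+1 by rewrite ltnS leq_subr.
rewrite (bigD1 (Ordinal mk_lt)) //= subKn // eqxx bin_sub // big1 ?addn0 // => l.
move=> lmk; case: eqP => // kml; move: lmk.
by rewrite -val_eqE /= kml subKn ?eqxx // -ltnS.
Qed.

Section StarHeightOne.
Variable m : nat.
Local Notation V := (tvtx m 1).
Local Notation stem := (tstem m 1).
Local Notation root := (troot m 1).
Local Notation child := (@tchild1 m).
Local Notation cn := (cnbh (@tadj m 1)).
Local Notation PD := (power_dominating (@tadj m 1)).
Implicit Types (S A : {set V}) (v x y : V) (T : {set 'I_m}).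

Lemma vertex1_cases v : [\/ v = stem, v = root | exists i, v = child i].
Proof.
case: v => [[[[|[|n]] hn] t]|]; [constructor 2 | constructor 3 | by [] | by constructor 1].
  by rewrite (tuple0 t) /troot (eq_irrelevance hn (ltn0Sn 1)).
exists (thead t); rewrite /tchild1 (eq_irrelevance hn (ltnSn 1)); congr (Some (existT _ _ _)).
by apply: val_inj; case: t => [[|a [|b s]] //= _].
Qed.

Lemma child_inj : injective child.
Proof. by move=> i j /(congr1 (fun v : V => if v is Some x then word x else [::])) []. Qed.

Lemma stem_root : stem != root. Proof. by []. Qed.
Lemma stem_child i : stem != child i. Proof. by []. Qed.
Lemma root_child i : root != child i. Proof. by []. Qed.

Lemma adj_root v : tadj root v = (v != root).
Proof. by case: (vertex1_cases v) => [->|->|[i ->]]; rewrite ?eqxx // eq_sym ?root_child. Qed.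

Lemma adj_leaf x v : x != root -> tadj x v = (v == root).
Proof.
case: (vertex1_cases x) => [->|->|[i ->]]; rewrite ?eqxx // => _;
  case: (vertex1_cases v) => [->|->|[j ->]]; rewrite ?eqxx //;
  by rewrite ?(negbTE stem_root) // eq_sym (negbTE (root_child _)).
Qed.

Lemma cnbh_root : cn [set root] = [set: V].
Proof.
apply/setP => v; rewrite in_cnbh !inE; case: eqP => //= /eqP vr.
by apply/existsP; exists root; rewrite set11 adj_root.
Qed.

(* Every vertex other than the root only sees the root, so a root-free set
   dominates at most itself and the root. *)
Lemma cnbh_rootless S : root \notin S -> cn S \subset root |: S.
Proof.
move=> rS; apply/subsetP => v; rewrite in_cnbh in_setU1.
case/orP=> [->|/existsP[x /andP[xS xv]]]; first by rewrite orbT.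
have xr : x != root by apply: contraNneq rS => <-.
by move: xv; rewrite adj_leaf // => /eqP ->; rewrite eqxx.
Qed.

(* A set containing the root but missing two vertices is forcing-closed:
   its leaves have no neighbour outside it and the root has at least two. *)
Lemma closed_of_two_missing A x y :
  root \in A -> x \notin A -> y \notin A -> x != y -> forcing_closed (@tadj m 1) A.
Proof.
move=> rA xA yA xy a z aA zA az.
have [ar|anr] := eqVneq a root; last first.
  by move: az; rewrite adj_leaf // => /eqP zr; rewrite zr rA in zA.
have notroot w : w \notin A -> w != root by apply: contraNneq => ->.
rewrite ar; have [zx|zx] := eqVneq z x.
  by exists y; rewrite adj_root notroot // zx eq_sym.
by exists x; rewrite adj_root notroot // eq_sym.
Qed.

Definition chs T : {set V} := child @: T.

Lemma stem_chs T : stem \notin chs T.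
Proof. by apply/imsetP => -[i _]; apply/eqP; rewrite stem_child. Qed.

Lemma root_chs T : root \notin chs T.
Proof. by apply/imsetP => -[i _]; apply/eqP; rewrite root_child. Qed.

Lemma child_chs i T : (child i \in chs T) = (i \in T).
Proof. exact: mem_imset _ _ child_inj. Qed.

Lemma card_chs T : #|chs T| = #|T|.
Proof. exact: card_imset _ child_inj. Qed.

Lemma card_root_chs T : #|root |: chs T| = #|T|.+1.
Proof. by rewrite cardsU1 root_chs card_chs. Qed.

Lemma rootless_chs S : stem \notin S -> root \notin S -> chs (child @^-1: S) = S.
Proof.
move=> sS rS; apply/setP => v; case: (vertex1_cases v) => [->|->|[i ->]].
- by rewrite (negbTE (stem_chs _)) (negbTE sS).
- by rewrite (negbTE (root_chs _)) (negbTE rS).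
- by rewrite child_chs inE.
Qed.

Lemma rooted_chs S : stem \notin S -> root \in S -> root |: chs (child @^-1: S) = S.
Proof.
move=> sS rS; apply/setP => v; rewrite in_setU1.
case: (vertex1_cases v) => [->|->|[i ->]].
- by rewrite (negbTE stem_root) (negbTE (stem_chs _)) (negbTE sS).
- by rewrite eqxx rS.
- by rewrite eq_sym (negbTE (root_child i)) child_chs inE.
Qed.

Lemma pd_with_root S : root \in S -> PD S.
Proof.
move=> rS; apply: pd_of_cnbh; apply/setP => v; rewrite [RHS]inE in_cnbh.
have [->|vr] := eqVneq v root; first by rewrite rS.
by apply/orP; right; apply/existsP; exists root; rewrite rS adj_root.
Qed.

(* The set of all children observes everything but the stem, which the root
   then forces. *)
Lemma pd_all_children : 0 < m -> PD (chs setT).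
Proof.
move=> m_gt0; apply: (@pd_of_cnbh_but_one _ _ _ root stem); rewrite ?adj_root //.
move=> v; rewrite in_cnbh; case: (vertex1_cases v) => [->|->|[i ->]].
- by rewrite eqxx.
- move=> _; apply/orP; right; apply/existsP; exists (child (Ordinal m_gt0)).
  by rewrite child_chs inE adj_leaf ?eqxx // eq_sym root_child.
- by rewrite child_chs inE.
Qed.

Lemma children_cases T :
  [\/ T = setT, exists i, T = ~: [set i] | exists i j, [/\ i \notin T, j \notin T & i != j]].
Proof.
case: (pickP (fun i => i \notin T)) => [i /= iT|allT]; last first.
  by constructor 1; apply/setP => i; rewrite inE; move: (allT i) => /= /negbFE.
case: (pickP (fun j => (j != i) && (j \notin T))) => [j /andP[ji jT]|oneT].
  by constructor 3; exists i, j; rewrite eq_sym.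
constructor 2; exists i; apply/setP => j; rewrite !inE.
have [->|ji] := eqVneq j i; first exact: negbTE.
by move: (oneT j); rewrite /= ji => /negbFE.
Qed.

(* From now on m >= 2, so that every child has a sibling. *)
Section AtLeastTwoChildren.
Hypothesis two_le_m : 1 < m.

Lemma other_child i : exists j : 'I_m, j != i.
Proof.
have [i0|i_pos] := eqVneq (val i) 0.
  by exists (Ordinal two_le_m); rewrite -val_eqE /= i0.
by exists (Ordinal (ltnW two_le_m)); rewrite -val_eqE /= eq_sym.
Qed.

(* All children but r_i: the root is observed, the propagation stops since the
   root has two unobserved neighbours r' and r_i, and adding r' lets the root
   force r_i. *)
Lemma one_child_missing i (S := chs (~: [set i])) :
  [/\ pinf (@tadj m 1) S = root |: S, ~~ PD S & PD (stem |: S)].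
Proof.
have [j ji] := other_child i.
have jS : child j \in S by rewrite child_chs !inE.
have iS : child i \notin S by rewrite child_chs !inE eqxx.
have stem_out : stem \notin root |: S by rewrite in_setU1 (negbTE stem_root) stem_chs.
have closed : forcing_closed (@tadj m 1) (root |: S).
  apply: (closed_of_two_missing (setU11 _ _) stem_out) (stem_child i).
  by rewrite in_setU1 eq_sym (negbTE (root_child i)).
have NS : cn S \subset root |: S by apply: cnbh_rootless; exact: root_chs.
split.
- apply/eqP; rewrite eqEsubset pinf_sub_closed //=.
  apply: subset_trans (cnbh_sub_pinf _ _); rewrite subUset subsetUl sub1set andbT.
  by rewrite in_cnbh; apply/orP; right; apply/existsP; exists (child j);
    rewrite jS adj_leaf ?eqxx // eq_sym root_child.
- exact: not_pd_of_closed NS closed stem_out.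
- apply: (@pd_of_cnbh_but_one _ _ _ root (child i)); rewrite ?adj_root ?root_child //.
  move=> v vi; rewrite in_cnbh in_setU1; case: (vertex1_cases v) vi => [->|->|[k ->]] vi.
  + by rewrite eqxx.
  + by apply/orP; right; apply/existsP; exists stem; rewrite setU11 adj_leaf ?eqxx ?stem_root.
  + by rewrite child_chs !inE -(inj_eq child_inj) vi orbT.
Qed.

(* With two children r_i, r_j missing, neither S nor S + r' gets past the root:
   the root always keeps r_i and r_j unobserved. *)
Lemma two_children_missing T i j : i \notin T -> j \notin T -> i != j ->
  ~~ PD (chs T) /\ ~~ PD (stem |: chs T).
Proof.
move=> iT jT ij; set A := root |: (stem |: chs T).
have out k : k \notin T -> child k \notin A.
  move=> kT; rewrite !in_setU1 child_chs (negbTE kT) orbF !(eq_sym (child k)).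
  exact: stem_child.
have closed : forcing_closed (@tadj m 1) A.
  by apply: (closed_of_two_missing (setU11 _ _) (out i iT) (out j jT)); rewrite (inj_eq child_inj).
have rootless : root \notin stem |: chs T by rewrite in_setU1 eq_sym (negbTE stem_root) root_chs.
split; apply: (not_pd_of_closed _ closed (out i iT)).
- apply: subset_trans (cnbh_rootless (root_chs T)) _.
  by rewrite setUS // subsetUr.
- exact: cnbh_rootless.
Qed.

Lemma typeII_iff S : typeII S = [exists i, S == chs (~: [set i])].
Proof.
apply/idP/existsP => [/and3P[sS nPD PD2]|[i /eqP ->]]; last first.
  by have [_ nPD PD2] := one_child_missing i; rewrite /typeII /TpdS stem_chs nPD PD2.
have rS : root \notin S by apply: contra nPD; exact: pd_with_root.
move: nPD PD2; rewrite -(rootless_chs sS rS); set T := child @^-1: S.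
case: (children_cases T) => [->|[i ->]|[i [j [iT jT ij]]]] nPD PD2.
- by case/negP: nPD; apply: pd_all_children; exact: ltnW.
- by exists i.
- by have [_ /negP[]] := two_children_missing iT jT ij.
Qed.

Lemma typeI_iff S : typeI S = (stem \notin S) && ((root \in S) || (S == chs setT)).
Proof.
rewrite /typeI /TpdS; have [sS|sS] //= := boolP (stem \in S).
apply/idP/orP => [pd|[/pd_with_root //|/eqP ->]]; last exact/pd_all_children/ltnW.
have [rS|rS] := boolP (root \in S); [by left | right].
move: pd; rewrite -(rootless_chs sS rS); set T := child @^-1: S.
case: (children_cases T) => [->//|[i ->]|[i [j [iT jT ij]]]] pd.
- by have [_ /negP[]] := one_child_missing i.
- by have [/negP[]] := two_children_missing iT jT ij.
Qed.

Lemma Hcount1 k : Hcount m 1 k = if k == m - 1 then m else 0.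
Proof.
have card_but i : #|chs (~: [set i])| = m - 1 by rewrite card_chs cardsC1 card_ord subn1.
rewrite /Hcount; have [->|km] := eqVneq k (m - 1).
  have -> : [set S | typeII S & #|S| == m - 1] = [set chs (~: [set i]) | i : 'I_m].
    apply/setP => S; rewrite inE typeII_iff.
    apply/andP/imsetP => [[/existsP[i /eqP ->] _]|[i _ ->]]; first by exists i.
    by split; [apply/existsP; exists i | rewrite card_but].
  rewrite card_imset ?card_ord // => i j /(imset_inj child_inj).
  by move/setC_inj/set1_inj.
apply/eqP; rewrite cards_eq0; apply/eqP/setP => S; rewrite !inE typeII_iff.
by apply/negP => /andP[/existsP[i /eqP ->]]; rewrite card_but eq_sym (negbTE km).
Qed.

Lemma typeI_of_size k :
  [set S | typeI S & #|S| == k] =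
  [set root |: chs T | T in [set T : {set 'I_m} | #|T|.+1 == k]]
  :|: [set S | (S == chs setT) && (k == m)].
Proof.
apply/setP => S; rewrite !inE typeI_iff; apply/idP/idP.
  case/andP=> /andP[sS /orP[rS|/eqP ->]] /eqP kS; last first.
    by rewrite -kS eqxx card_chs cardsT card_ord eqxx orbT.
  apply/orP; left; apply/imsetP; exists (child @^-1: S); last by rewrite rooted_chs.
  by rewrite inE -kS -{2}(rooted_chs sS rS) card_root_chs.
case/orP => [/imsetP[T]|/andP[/eqP -> /eqP km]].
  rewrite inE => /eqP kT ->; rewrite in_setU1 (negbTE stem_root) stem_chs setU11.
  by rewrite card_root_chs kT eqxx.
by rewrite stem_chs eqxx orbT card_chs cardsT card_ord km eqxx.
Qed.

Lemma Ecount1 k : Ecount m 1 k = (if k is k'.+1 then 'C(m, k') else 0) + (k == m).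
Proof.
have rooted_inj : injective (fun T => root |: chs T).
  move=> T1 T2 /(congr1 (fun A => A :\ root)) /=.
  by rewrite !setU1K ?root_chs // => /(imset_inj child_inj).
rewrite /Ecount typeI_of_size cardsU.
rewrite (_ : _ :&: _ = set0) ?cards0 ?subn0; last first.
  apply/setP => S; rewrite !inE; apply/negP => /andP[/imsetP[T _ ->] /andP[/eqP rT _]].
  by move: (root_chs setT); rewrite -rT setU11.
rewrite card_imset //; congr (_ + _).
  case: k => [|k].
    by apply/eqP; rewrite cards_eq0; apply/eqP/setP => T; rewrite !inE.
  by under eq_finset => T do rewrite eqSS; rewrite card_draws card_ord.
case: (k == m).
  by rewrite (_ : [set S | _] = [set chs setT]) ?cards1 //; apply/setP => S; rewrite !inE andbT.
by rewrite (_ : [set S | _] = set0) ?cards0 //; apply/setP => S; rewrite !inE andbF.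
Qed.

Lemma typeII_unobserved_near_root S : typeII S ->
  exists i, cn [set root] :\: pinf (@tadj m 1) S = [set stem; child i].
Proof.
rewrite typeII_iff => /existsP[i /eqP ->]; exists i.
have [-> _ _] := one_child_missing i.
apply/setP => v; rewrite cnbh_root setTD !inE.
case: (vertex1_cases v) => [->|->|[k ->]].
- by rewrite eqxx (negbTE stem_root) (negbTE (stem_chs _)).
- by rewrite eqxx eq_sym (negbTE stem_root) (negbTE (root_child i)).
- rewrite child_chs !inE (inj_eq child_inj) !(eq_sym (child k)).
  by rewrite (negbTE (root_child k)) (negbTE (stem_child k)); case: (k == i).
Qed.

End AtLeastTwoChildren.
End StarHeightOne.

Theorem mainTheorem5 (m : nat) (hm : 2 <= m) :
  (forall S : {set tvtx m 1}, typeII S ->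
     exists i : 'I_m,
       cnbh (@tadj m 1) [set troot m 1] :\: pinf (@tadj m 1) S
       = [set tstem m 1; tchild1 i]) /\
  (forall k : nat,
     Hcount m 1 k = bracket m 0 1 k /\
     Ecount m 1 k = bracket m 0 0 k
                    + (if k is k'.+1 then \sum_(l < m.+1) bracket m 0 l k' else 0)).
Proof.
split=> [S|k]; first exact: typeII_unobserved_near_root.
split; first by rewrite (Hcount1 hm) bracket0 ?bin1 // ltnW.
rewrite (Ecount1 hm) bracket0 // subn0 bin0 addnC.
by case: k => [|k]; rewrite ?sum_bracket0.
Qed.
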